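(* Let $\mathcal{T}\subset\mathcal{D}$ be a tree and $\mu,\nu$ finite Borel measures on $[0,1)$ such that (A) $\mu(\mathbf{Top}(\mathcal{T}))>0$ and $\nu(\mathbf{Top}(\mathcal{T}))>0$, and (B) both $\mu$ and $\nu$ are $(\mathcal{T},D)$-doubling for some $D\ge1$. Define $$\nu_{\mathcal{T}} := \nu|_{\partial\mathcal{T}} + \sum_{I\in\mathbf{Leaves}(\mathcal{T})}\frac{\nu(I)}{\mu(I)}\,\mu|_I.$$ If $$\sum_{I\in\mathcal{T}\setminus\mathbf{Leaves}(\mathcal{T})}\Delta^2_{\mu,\nu}(I)\mu(I)<\infty,$$ then $\mu|_{\mathbf{Top}(\mathcal{T})}\ll\nu_{\mathcal{T}}$. In particular $\mu|_{\partial\mathcal{T}}\ll\nu$.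
   Context: $\mathcal{D}$: dyadic intervals $[j2^{-k},(j+1)2^{-k})\subset[0,1)$, $k\ge0$; $\hat I$ is the parent of $I$, and $I_-,I_+$ are the left and right halves of $I$. $\Delta_{\mu,\nu}(I) := |\mu(I_-)/\mu(I) - \nu(I_-)/\nu(I)|$. A tree is a family $\mathcal{T}\subset\mathcal{D}$ that is coherent (if $Q,R\in\mathcal{T}$, $P\in\mathcal{D}$, $Q\subset P\subset R$, then $P\in\mathcal{T}$), has a unique largest element $\mathbf{Top}(\mathcal{T})$, and in which every $I\in\mathcal{T}$ has either $0$ or $2$ children in $\mathcal{T}$. $\mathbf{Leaves}(\mathcal{T})$ is the set of $I\in\mathcal{T}$ with no children in $\mathcal{T}$ (also used for the union of these intervals), and $\partial\mathcal{T} := \mathbf{Top}(\mathcal{T})\setminus\bigcup\mathbf{Leaves}(\mathcal{T})$. A measure $\sigma$ is $(\mathcal{T},D)$-doubling if $\sigma(\hat I)\le D\sigma(I)$ for all $I\in\mathcal{T}\setminus\{\mathbf{Top}(\mathcal{T})\}$ (under (A),(B), $\mu(I),\nu(I)>0$ for all $I\in\mathcal{T}$). *)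

From Stdlib Require Import Reals Lra Lia ClassicalEpsilon.
Open Scope R_scope.

Definition dyad (k j : nat) : R -> Prop :=
  fun x => INR j / 2 ^ k <= x < (INR j + 1) / 2 ^ k.

Definition valid (k j : nat) : Prop := (j < 2 ^ k)%nat.

Definition incl (A B : R -> Prop) : Prop := forall x, A x -> B x.
Definition inter (A B : R -> Prop) : R -> Prop := fun x => A x /\ B x.

Inductive Borel : (R -> Prop) -> Prop :=
| Borel_dyad : forall k j, valid k j -> Borel (dyad k j)
| Borel_compl : forall A, Borel A -> Borel (fun x => 0 <= x < 1 /\ ~ A x)
| Borel_union : forall A : nat -> R -> Prop,
    (forall n, Borel (A n)) -> Borel (fun x => exists n, A n x).

Definition finite_measure (m : (R -> Prop) -> R) : Prop :=
  (forall A, Borel A -> 0 <= m A) /\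
  (forall A : nat -> R -> Prop,
     (forall n, Borel (A n)) ->
     (forall n p x, n <> p -> A n x -> A p x -> False) ->
     infinite_sum (fun n => m (A n)) (m (fun x => exists n, A n x))).

(* Trees of dyadic intervals, encoded as predicates on index pairs (k,j). *)
Definition children_in (T : nat -> nat -> Prop) (k j : nat) : Prop :=
  T (S k) (2 * j)%nat /\ T (S k) (2 * j + 1)%nat.

Definition is_tree (T : nat -> nat -> Prop) (kt jt : nat) : Prop :=
  (forall k j, T k j -> valid k j) /\
  (forall k1 j1 k2 j2 k j, T k1 j1 -> T k2 j2 -> valid k j ->
     incl (dyad k1 j1) (dyad k j) -> incl (dyad k j) (dyad k2 j2) -> T k j) /\
  (* (kt,jt) = Top(T) is the (unique) largest element *)
  T kt jt /\ (forall k j, T k j -> incl (dyad k j) (dyad kt jt)) /\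
  (forall k j, T k j -> (T (S k) (2 * j)%nat <-> T (S k) (2 * j + 1)%nat)).

Definition leaf (T : nat -> nat -> Prop) (k j : nat) : Prop :=
  T k j /\ ~ T (S k) (2 * j)%nat /\ ~ T (S k) (2 * j + 1)%nat.

Definition leaves_union (T : nat -> nat -> Prop) : R -> Prop :=
  fun x => exists k j, leaf T k j /\ dyad k j x.

Definition boundary (T : nat -> nat -> Prop) (kt jt : nat) : R -> Prop :=
  fun x => dyad kt jt x /\ ~ leaves_union T x.

(* (T,D)-doubling: sigma(parent I) <= D sigma(I) for I in T \ {Top};
   the parent of I_{k,j} (k >= 1) is I_{k-1, j/2}. *)
Definition doubling (s : (R -> Prop) -> R) (T : nat -> nat -> Prop)
  (kt jt : nat) (D : R) : Prop :=
  forall k j, T k j -> (k, j) <> (kt, jt) ->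
    s (dyad (k - 1) (j / 2)) <= D * s (dyad k j).

(* Delta_{mu,nu}(I) with I_- the left half *)
Definition Delta (mu nu : (R -> Prop) -> R) (k j : nat) : R :=
  Rabs (mu (dyad (S k) (2 * j)%nat) / mu (dyad k j)
        - nu (dyad (S k) (2 * j)%nat) / nu (dyad k j)).

Fixpoint sumR (n : nat) (f : nat -> R) : R :=
  match n with O => 0 | S n' => sumR n' f + f n' end.

Definition indic (P : Prop) (v : R) : R :=
  if excluded_middle_informative P then v else 0.

Definition series (u : nat -> R) : R :=
  epsilon (inhabits 0) (fun l => infinite_sum u l).

(* level-k part of the sum over I in T \ Leaves(T) of Delta^2(I) mu(I) *)
Definition energy_level (mu nu : (R -> Prop) -> R) (T : nat -> nat -> Prop)
  (k : nat) : R :=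
  sumR (2 ^ k) (fun j => indic (T k j /\ ~ leaf T k j)
                         (Delta mu nu k j ^ 2 * mu (dyad k j))).

Definition nuT (mu nu : (R -> Prop) -> R) (T : nat -> nat -> Prop)
  (kt jt : nat) (B : R -> Prop) : R :=
  nu (inter B (boundary T kt jt)) +
  series (fun k => sumR (2 ^ k) (fun j =>
     indic (leaf T k j) (nu (dyad k j) / mu (dyad k j) * mu (inter B (dyad k j))))).

Definition abs_cont (m1 m2 : (R -> Prop) -> R) : Prop :=
  forall B, Borel B -> m2 B = 0 -> m1 B = 0.

Definition restrict (m : (R -> Prop) -> R) (A : R -> Prop) : (R -> Prop) -> R :=
  fun B => m (inter B A).

(* Off the boundary the claim reduces to the leaves, on which [nu_T] is a positive multiple
   of [mu]; the content is [mu|dT << nu].  Let [H_c] be the set of boundary points lying in a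
   tree interval with [mu/nu > c].  Off [H_c], [mu <= c nu] on every dyadic interval, hence
   on every Borel set by outer regularity of [nu], so it suffices that [mu(H_c) -> 0].  Above
   a fixed level [N] the ratios [mu/nu] are bounded; below it, a stopping-time argument on
   the potential [mu(I)^2/nu(I)], whose increase from [I] to its children is at most
   [D^2 Delta^2(I) mu(I) mu(I)/nu(I)] by doubling, bounds [mu(H_c)] by a small multiple of
   [mu[0,1)] plus [D^2] times the tail of the energy series beyond [N]. *)

From Pilot Require Import Defs.
From Stdlib Require Import Reals Lra Lia ClassicalEpsilon FunctionalExtensionality PropExtensionality Classical.
Open Scope R_scope.

Lemma set_ext (A B : R -> Prop) : (forall x, A x <-> B x) -> A = B.
Proof.
  intros H; apply functional_extensionality; intros x.
  apply propositional_extensionality; auto.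
Qed.

Lemma Rle_of_le_plus_eps a b : (forall eps, 0 < eps -> a <= b + eps) -> a <= b.
Proof. intros H. destruct (Rle_dec a b); auto. specialize (H ((a - b) / 2)). lra. Qed.

Lemma Rexists_scale_above M delta : 0 < delta -> exists c, 0 < c /\ M <= c /\ M <= delta * c.
Proof.
  intros Hd. pose proof (Rabs_pos M). pose proof (RRle_abs M).
  assert (HMd : 0 <= Rabs M / delta) by (apply Rmult_le_pos; [lra | apply Rlt_le, Rinv_0_lt_compat; lra]).
  exists (Rabs M / delta + Rabs M + 1). split; [lra | split; [lra|]].
  replace (delta * (Rabs M / delta + Rabs M + 1)) with (Rabs M + delta * Rabs M + delta) by (field; lra).
  assert (0 <= delta * Rabs M) by (apply Rmult_le_pos; lra). lra.
Qed.

Lemma pow2_pos k : 0 < 2 ^ k.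
Proof. apply pow_lt; lra. Qed.

Lemma dyad_scaled k j x : dyad k j x <-> INR j <= x * 2 ^ k < INR j + 1.
Proof.
  unfold dyad. pose proof (pow2_pos k) as Hp. set (p := 2 ^ k) in *.
  assert (E1 : INR j / p * p = INR j) by (field; lra).
  assert (E2 : (INR j + 1) / p * p = INR j + 1) by (field; lra).
  split; intros [H1 H2]; split.
  - rewrite <- E1. apply Rmult_le_compat_r; lra.
  - rewrite <- E2. apply Rmult_lt_compat_r; lra.
  - apply Rmult_le_reg_r with p; [lra|]. rewrite E1; lra.
  - apply Rmult_lt_reg_r with p; [lra|]. rewrite E2; lra.
Qed.

Lemma dyad_index_unique k j j' x : dyad k j x -> dyad k j' x -> j = j'.
Proof.
  rewrite !dyad_scaled; intros [H1 H2] [H3 H4].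
  destruct (Nat.lt_trichotomy j j') as [Hl|[He|Hl]]; auto.
  - assert (INR (S j) <= INR j') by (apply le_INR; lia). rewrite S_INR in H. lra.
  - assert (INR (S j') <= INR j) by (apply le_INR; lia). rewrite S_INR in H. lra.
Qed.

Lemma dyad_parent k j x : dyad (S k) j x -> dyad k (j / 2) x.
Proof.
  rewrite !dyad_scaled. simpl pow. intros [H1 H2].
  pose proof (Nat.div_mod_eq j 2) as Hj.
  pose proof (Nat.mod_upper_bound j 2 ltac:(lia)) as Hr.
  set (q := (j / 2)%nat) in *. set (r := (j mod 2)%nat) in *.
  assert (INR j = 2 * INR q + INR r) by (rewrite Hj, plus_INR, mult_INR; simpl; lra).
  assert (INR r <= 1) by (replace 1 with (INR 1) by reflexivity; apply le_INR; lia).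
  assert (0 <= INR r) by apply pos_INR.
  split; nra.
Qed.

Lemma dyad_children_cover k j x :
  dyad k j x -> dyad (S k) (2 * j) x \/ dyad (S k) (2 * j + 1) x.
Proof.
  rewrite !dyad_scaled. simpl pow. intros [H1 H2].
  rewrite plus_INR, mult_INR. simpl INR.
  destruct (Rlt_le_dec (x * (2 * 2 ^ k)) (2 * INR j + 1)); [left|right]; split; nra.
Qed.

Lemma dyad_children_incl k j x :
  dyad (S k) (2 * j) x \/ dyad (S k) (2 * j + 1) x -> dyad k j x.
Proof.
  intros [H|H]; apply dyad_parent in H;
  [replace (2 * j / 2)%nat with j in H | replace ((2 * j + 1) / 2)%nat with j in H]; auto.
  - rewrite Nat.mul_comm, Nat.div_mul; lia.
  - rewrite Nat.mul_comm, Nat.div_add_l by lia. simpl; lia.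
Qed.

Lemma valid_children k j : valid k j -> valid (S k) (2 * j) /\ valid (S k) (2 * j + 1).
Proof. unfold valid. rewrite Nat.pow_succ_r'. lia. Qed.

Lemma dyad_exists x k : 0 <= x < 1 -> exists j, valid k j /\ dyad k j x.
Proof.
  intros Hx. induction k as [|k [j [Hv Hd]]].
  - exists 0%nat. split; [unfold valid; simpl; lia|]. rewrite dyad_scaled. simpl. lra.
  - unfold valid in *.
    destruct (dyad_children_cover _ _ _ Hd); eexists; split; eauto; simpl; lia.
Qed.

Lemma dyad_in_unit k j x : valid k j -> dyad k j x -> 0 <= x < 1.
Proof.
  unfold valid. rewrite dyad_scaled. intros Hv [H1 H2].
  pose proof (pos_INR j). pose proof (pow2_pos k).
  assert (INR (S j) <= INR (2 ^ k)) by (apply le_INR; lia).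
  rewrite S_INR, pow_INR in H3. simpl in H3. replace (1 + 1) with 2 in H3 by lra.
  split.
  - destruct (Rlt_le_dec x 0); [|lra].
    assert (x * 2 ^ k < 0 * 2 ^ k) by (apply Rmult_lt_compat_r; lra). lra.
  - destruct (Rlt_le_dec x 1); [lra|].
    assert (1 * 2 ^ k <= x * 2 ^ k) by (apply Rmult_le_compat_r; lra). lra.
Qed.

Lemma dyad_ancestor d k j x : dyad (k + d) j x -> dyad k (j / 2 ^ d) x.
Proof.
  revert j. induction d; intros j H.
  - rewrite Nat.add_0_r in H. rewrite Nat.pow_0_r, Nat.div_1_r. auto.
  - rewrite Nat.add_succ_r in H. apply dyad_parent, IHd in H.
    rewrite Nat.Div0.div_div in H. rewrite Nat.pow_succ_r'. auto.
Qed.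

Lemma dyad_nested k j k' j' x : (k' <= k)%nat -> dyad k j x -> dyad k' j' x ->
  incl (dyad k j) (dyad k' j').
Proof.
  intros Hk H1 H2 y Hy.
  replace k with (k' + (k - k'))%nat in H1, Hy by lia.
  apply dyad_ancestor in H1. apply dyad_ancestor in Hy.
  rewrite (dyad_index_unique _ _ _ _ H2 H1). auto.
Qed.

Lemma dyad_left_end k j : dyad k j (INR j / 2 ^ k).
Proof.
  rewrite dyad_scaled. pose proof (pow2_pos k).
  replace (INR j / 2 ^ k * 2 ^ k) with (INR j) by (field; lra). lra.
Qed.

Lemma dyad_incl_level k j k' j' : incl (dyad k j) (dyad k' j') -> (k' <= k)%nat.
Proof.
  intros Hi. destruct (Nat.le_gt_cases k' k) as [|Hlt]; auto. exfalso.
  pose proof (dyad_left_end k j) as Hx. set (x := INR j / 2 ^ k) in *.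
  assert (Hx' := Hi x Hx).
  set (c1 := (j' / 2 ^ (k' - S k))%nat).
  assert (H1 : dyad (S k) c1 x).
  { apply dyad_ancestor. replace (S k + (k' - S k))%nat with k' by lia. auto. }
  assert (Hi1 : incl (dyad k' j') (dyad (S k) c1)) by (eapply dyad_nested; eauto; lia).
  (* [I_{k',j'}] lies in one child of [I_{k,j}]; the left end of the other child escapes it. *)
  set (c2 := if Nat.eq_dec c1 (2 * j) then (2 * j + 1)%nat else (2 * j)%nat).
  assert (Hc : c1 = (2 * j)%nat \/ c1 = (2 * j + 1)%nat).
  { destruct (dyad_children_cover _ _ _ Hx) as [H|H]; [left|right];
      eapply dyad_index_unique; eauto. }
  assert (Hc2 : c2 <> c1 /\ (c2 = (2 * j)%nat \/ c2 = (2 * j + 1)%nat)).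
  { unfold c2. destruct (Nat.eq_dec c1 (2 * j)); lia. }
  pose proof (dyad_left_end (S k) c2) as Hy.
  assert (Hyk : dyad k j (INR c2 / 2 ^ S k)).
  { apply dyad_children_incl. destruct Hc2 as [_ [E|E]]; rewrite <- E; auto. }
  apply Hi, Hi1 in Hyk. apply (proj1 Hc2). eapply dyad_index_unique; eauto.
Qed.

Lemma Borel_ext A B : Borel A -> (forall x, A x <-> B x) -> Borel B.
Proof. intros H E. rewrite <- (set_ext _ _ E). auto. Qed.

Lemma Borel_in_unit A : Borel A -> forall x, A x -> 0 <= x < 1.
Proof.
  induction 1; intros x Hx.
  - eapply dyad_in_unit; eauto.
  - tauto.
  - destruct Hx as [n Hn]. eauto.
Qed.

Lemma Borel_unit : Borel (fun x => 0 <= x < 1).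
Proof.
  eapply Borel_ext. apply (Borel_dyad 0 0). unfold valid; simpl; lia.
  intros x. rewrite dyad_scaled. simpl. lra.
Qed.

Lemma Borel_empty : Borel (fun _ => False).
Proof. eapply Borel_ext. apply Borel_compl, Borel_unit. intros x; tauto. Qed.

Lemma Borel_union2 A B : Borel A -> Borel B -> Borel (fun x => A x \/ B x).
Proof.
  intros HA HB.
  eapply Borel_ext. apply (Borel_union (fun n => match n with O => A | _ => B end)).
  - intros [|n]; auto.
  - intros x; split.
    + intros [[|n] H]; auto.
    + intros [H|H]; [exists O | exists 1%nat]; auto.
Qed.

Lemma Borel_inter A B : Borel A -> Borel B -> Borel (inter A B).
Proof.
  intros HA HB. eapply Borel_ext.
  - apply Borel_compl, (Borel_union2 (fun x => 0 <= x < 1 /\ ~ A x) (fun x => 0 <= x < 1 /\ ~ B x));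
      apply Borel_compl; eauto.
  - intros x; split.
    + intros [H1 H2]. split; apply NNPP; tauto.
    + intros [H1 H2]. pose proof (Borel_in_unit _ HA _ H1). tauto.
Qed.

Lemma Borel_diff A B : Borel A -> Borel B -> Borel (fun x => A x /\ ~ B x).
Proof.
  intros HA HB. eapply Borel_ext. apply Borel_inter. apply HA. apply Borel_compl, HB.
  intros x; unfold inter; split. tauto. intros [H1 H2]. pose proof (Borel_in_unit _ HA _ H1). tauto.
Qed.

Lemma Borel_finite_union n (F : nat -> R -> Prop) :
  (forall i, (i < n)%nat -> Borel (F i)) -> Borel (fun x => exists i, (i < n)%nat /\ F i x).
Proof.
  intros H. eapply Borel_ext.
  - apply (Borel_union (fun i => if Compare_dec.lt_dec i n then F i else fun _ => False)).
    intros i. destruct (Compare_dec.lt_dec i n); auto using Borel_empty.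
  - intros x; split.
    + intros [i Hi]. destruct (Compare_dec.lt_dec i n); eauto. tauto.
    + intros [i [Hi Hx]]. exists i. destruct (Compare_dec.lt_dec i n); auto; lia.
Qed.

Lemma Borel_dyadic_level k (P : nat -> Prop) :
  Borel (fun x => exists j, P j /\ valid k j /\ dyad k j x).
Proof.
  eapply Borel_ext.
  - apply (Borel_finite_union (2 ^ k) (fun j x => P j /\ dyad k j x)).
    intros i Hi. destruct (classic (P i)).
    + eapply Borel_ext. apply (Borel_dyad k i Hi). intros; tauto.
    + eapply Borel_ext. apply Borel_empty. intros; tauto.
  - intros x; split; intros [i H]; exists i; unfold valid in *; tauto.
Qed.

Lemma Borel_dyadic_union (P : nat -> nat -> Prop) :
  Borel (fun x => exists k j, P k j /\ valid k j /\ dyad k j x).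
Proof.
  eapply Borel_ext.
  - apply (Borel_union (fun k x => exists j, P k j /\ valid k j /\ dyad k j x)).
    intros k; apply Borel_dyadic_level.
  - intros x; tauto.
Qed.

Lemma sumR_ext n f g : (forall i, (i < n)%nat -> f i = g i) -> sumR n f = sumR n g.
Proof. induction n; intros H; simpl; auto. rewrite IHn, H; auto. Qed.

Lemma sumR_le n f g : (forall i, (i < n)%nat -> f i <= g i) -> sumR n f <= sumR n g.
Proof.
  induction n; intros H; simpl. lra.
  pose proof (IHn ltac:(intros; apply H; lia)). pose proof (H n ltac:(lia)). lra.
Qed.

Lemma sumR_const0 n : sumR n (fun _ => 0) = 0.
Proof. induction n; simpl; lra. Qed.

Lemma sumR_plus n f g : sumR n (fun i => f i + g i) = sumR n f + sumR n g.
Proof. induction n; simpl. lra. rewrite IHn. lra. Qed.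

Lemma sumR_scal n c f : sumR n (fun i => c * f i) = c * sumR n f.
Proof. induction n; simpl. lra. rewrite IHn. lra. Qed.

Lemma sumR_nonneg n f : (forall i, (i < n)%nat -> 0 <= f i) -> 0 <= sumR n f.
Proof. intros H. rewrite <- (sumR_const0 n). apply sumR_le. auto. Qed.

Lemma sumR_term n f i : (forall i, (i < n)%nat -> 0 <= f i) -> (i < n)%nat -> f i <= sumR n f.
Proof.
  induction n; intros H Hi. lia. simpl.
  pose proof (sumR_nonneg n f ltac:(intros; apply H; lia)).
  destruct (Nat.eq_dec i n). subst; lra.
  pose proof (IHn ltac:(intros; apply H; lia) ltac:(lia)). pose proof (H n ltac:(lia)). lra.
Qed.

Lemma sumR_double n f : sumR (2 * n) f = sumR n (fun j => f (2 * j)%nat + f (2 * j + 1)%nat).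
Proof.
  induction n. simpl; auto.
  replace (2 * S n)%nat with (S (S (2 * n))) by lia. cbn [sumR]. rewrite IHn.
  replace (S (2 * n)) with (2 * n + 1)%nat by lia. lra.
Qed.

Lemma sumR_shift e g : sumR (S e) g = g O + sumR e (fun m => g (S m)).
Proof. induction e. simpl; lra. cbn [sumR] in *. rewrite IHe. lra. Qed.

Lemma sumR_add a e f : sumR (a + e) f = sumR a f + sumR e (fun m => f (a + m)%nat).
Proof.
  induction e. rewrite Nat.add_0_r. simpl. lra.
  rewrite Nat.add_succ_r. cbn [sumR]. rewrite IHe. lra.
Qed.

Lemma sumR_le_length a b f : (forall n, 0 <= f n) -> (a <= b)%nat -> sumR a f <= sumR b f.
Proof.
  intros H Hab. replace b with (a + (b - a))%nat by lia. rewrite sumR_add.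
  pose proof (sumR_nonneg (b - a) (fun m => f (a + m)%nat) ltac:(intros; apply H)). lra.
Qed.

Lemma sum_f_R0_sumR a n : sum_f_R0 a n = sumR (S n) a.
Proof. induction n; simpl. lra. rewrite IHn. simpl. lra. Qed.

Lemma sumR_geometric eps N : sumR N (fun i => eps / 2 ^ (S i)) = eps - eps / 2 ^ N.
Proof.
  induction N. simpl. field.
  cbn [sumR]. rewrite IHN. simpl. field. apply pow_nonzero; lra.
Qed.

Lemma sumR_bounded_cv f M : (forall n, 0 <= f n) -> (forall n, sumR n f <= M) ->
  { l | Un_cv (fun n => sumR n f) l }.
Proof.
  intros Hf HM. apply growing_cv.
  - intros n. cbn [sumR]. specialize (Hf n). lra.
  - exists M. intros y [n ->]. auto.
Qed.

Lemma sumR_tail_small f : (forall n, 0 <= f n) -> (exists M, forall n, sumR n f <= M) ->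
  forall eta, 0 < eta ->
  exists N, forall N', (N <= N')%nat -> forall e, sumR e (fun m => f (N' + m)%nat) <= eta.
Proof.
  intros Hf [M HM] eta Heta.
  destruct (sumR_bounded_cv f M Hf HM) as [L HL].
  assert (Hgrow : Un_growing (fun n => sumR n f)) by (intros n; cbn [sumR]; specialize (Hf n); lra).
  destruct (HL eta Heta) as [N HN]. exists N. intros N' HN' e.
  specialize (HN N ltac:(lia)). unfold Rdist in HN. apply Rabs_def2 in HN.
  pose proof (growing_ineq _ _ Hgrow HL (N' + e)) as Hle. cbv beta in Hle. rewrite sumR_add in Hle.
  pose proof (sumR_le_length N N' f Hf HN'). lra.
Qed.

Lemma indic_true (P : Prop) v : P -> indic P v = v.
Proof. intros H. unfold indic. destruct (excluded_middle_informative P); tauto. Qed.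

Lemma indic_false (P : Prop) v : ~ P -> indic P v = 0.
Proof. intros H. unfold indic. destruct (excluded_middle_informative P); tauto. Qed.

Lemma indic_nonneg (P : Prop) v : (P -> 0 <= v) -> 0 <= indic P v.
Proof. intros H. unfold indic. destruct (excluded_middle_informative P); auto; lra. Qed.

Lemma finite_levels_bounded (f : nat -> nat -> R) N :
  exists M, forall n j, valid n j -> (n <= N)%nat -> f n j <= M.
Proof.
  set (g := fun n => sumR (2 ^ n) (fun j => Rabs (f n j))).
  assert (Hg : forall n, 0 <= g n) by (intros n; apply sumR_nonneg; intros; apply Rabs_pos).
  exists (sumR (S N) g). intros n j Hv Hn.
  apply Rle_trans with (Rabs (f n j)); [apply RRle_abs|].
  apply Rle_trans with (g n).
  - apply (sumR_term _ (fun j => Rabs (f n j))); auto. intros; apply Rabs_pos.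
  - apply sumR_term; auto. lia.
Qed.

(** * Finite measures *)

Lemma infinite_sum_eventually_const s c N :
  (forall n, (n >= N)%nat -> sum_f_R0 s n = c) -> infinite_sum s c.
Proof.
  intros H eps Heps. exists N. intros n Hn. rewrite H by lia.
  unfold Rdist. rewrite Rminus_diag, Rabs_R0. lra.
Qed.

Section FiniteMeasure.

Variable m : (R -> Prop) -> R.
Hypothesis Hm : finite_measure m.

Lemma meas_nonneg A : Borel A -> 0 <= m A.
Proof. apply (proj1 Hm). Qed.

Lemma meas_empty : m (fun _ => False) = 0.
Proof.
  destruct Hm as [_ Hadd].
  specialize (Hadd (fun _ _ => False) (fun _ => Borel_empty) ltac:(tauto)). cbv beta in Hadd.
  replace (fun x : R => exists _ : nat, False) with (fun _ : R => False) in Hadd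
    by (apply set_ext; intros; split; [tauto | intros [_ []]]).
  set (c := m (fun _ => False)) in *.
  (* the partial sums of the constant series are [(n+1) c], which converge only if [c = 0] *)
  assert (Hsum : forall n, sum_f_R0 (fun _ => c) n = INR (S n) * c).
  { induction n; simpl sum_f_R0. simpl; lra. rewrite IHn, (S_INR (S n)). lra. }
  destruct (Req_dec c 0) as [|ne]; auto.
  destruct (Hadd (Rabs c)) as [N HN]. apply Rabs_pos_lt; auto.
  specialize (HN (S N) ltac:(lia)). unfold Rdist in HN. rewrite Hsum in HN.
  replace (INR (S (S N)) * c - c) with (INR (S N) * c) in HN by (rewrite (S_INR (S N)); lra).
  rewrite Rabs_mult, Rabs_pos_eq in HN by apply pos_INR.
  assert (1 <= INR (S N)) by (replace 1 with (INR 1) by reflexivity; apply le_INR; lia).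
  pose proof (Rabs_pos_lt c ne). nra.
Qed.

Lemma meas_null A : (forall x, ~ A x) -> m A = 0.
Proof.
  intros H. replace A with (fun _ : R => False) by (apply set_ext; firstorder).
  apply meas_empty.
Qed.

Lemma meas_union2 A B : Borel A -> Borel B ->
  (forall x, A x -> B x -> False) -> m (fun x => A x \/ B x) = m A + m B.
Proof.
  intros HA HB Hd.
  set (F := fun n => match n with O => A | 1%nat => B | _ => fun _ : R => False end).
  assert (HF : forall n, Borel (F n)) by (intros [|[|n]]; simpl; auto using Borel_empty).
  assert (HFd : forall n p x, n <> p -> F n x -> F p x -> False)
    by (intros [|[|n]] [|[|p]] x Hnp; simpl; try tauto; eauto).
  assert (E : (fun x => exists n, F n x) = (fun x => A x \/ B x)).
  { apply set_ext; intros x; split.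
    - intros [[|[|n]] H]; simpl in H; tauto.
    - intros [H|H]; [exists O|exists 1%nat]; auto. }
  pose proof (proj2 Hm F HF HFd) as Hsum. rewrite E in Hsum.
  eapply uniqueness_sum. apply Hsum.
  apply infinite_sum_eventually_const with (N := 1%nat).
  intros n Hn. induction n as [|n IH]. lia. destruct n. reflexivity.
  simpl sum_f_R0 in *. rewrite IH by lia. simpl F. rewrite meas_empty. lra.
Qed.

Lemma meas_diff A B : Borel A -> Borel B -> incl B A ->
  m (fun x => A x /\ ~ B x) = m A - m B.
Proof.
  intros HA HB Hi.
  replace (m A) with (m (fun x => B x \/ (A x /\ ~ B x))).
  - rewrite meas_union2; auto using Borel_diff. lra. tauto.
  - f_equal. apply set_ext. intros x. split.
    + intros [H|H]; auto. tauto.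
    + intros H. destruct (classic (B x)); tauto.
Qed.

Lemma meas_mono A B : Borel A -> Borel B -> incl A B -> m A <= m B.
Proof.
  intros HA HB Hi.
  pose proof (meas_diff B A HB HA Hi). pose proof (meas_nonneg _ (Borel_diff _ _ HB HA)). lra.
Qed.

Lemma meas_union2_le A B : Borel A -> Borel B -> m (fun x => A x \/ B x) <= m A + m B.
Proof.
  intros HA HB.
  replace (fun x => A x \/ B x) with (fun x => A x \/ (B x /\ ~ A x)).
  - rewrite meas_union2; auto using Borel_diff; [|tauto].
    pose proof (meas_mono (fun x => B x /\ ~ A x) B (Borel_diff _ _ HB HA) HB
                  ltac:(intros x; tauto)). lra.
  - apply set_ext. intros x. split; [tauto|]. intros [H|H]; auto. destruct (classic (A x)); tauto.
Qed.

Lemma meas_cover_le A B C : Borel A -> Borel B -> Borel C ->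
  (forall x, A x -> B x \/ C x) -> m A <= m B + m C.
Proof.
  intros HA HB HC H. eapply Rle_trans. apply meas_mono with (B := fun x => B x \/ C x);
    auto using Borel_union2. apply meas_union2_le; auto.
Qed.

Lemma finite_union_S n (F : nat -> R -> Prop) :
  (fun x => exists i, (i < S n)%nat /\ F i x) =
  (fun x => (exists i, (i < n)%nat /\ F i x) \/ F n x).
Proof.
  apply set_ext; intros x; split.
  - intros [i [Hi H]]. destruct (Nat.eq_dec i n). subst; auto. left; exists i; split; auto; lia.
  - intros [[i [Hi H]]|H]; [exists i|exists n]; split; auto.
Qed.

Lemma finite_union_0 (F : nat -> R -> Prop) :
  (fun x => exists i, (i < 0)%nat /\ F i x) = (fun _ => False).
Proof. apply set_ext; intros x; split. intros [i [Hi _]]; lia. tauto. Qed.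

Lemma meas_finite_union_le n (F : nat -> R -> Prop) :
  (forall i, (i < n)%nat -> Borel (F i)) ->
  m (fun x => exists i, (i < n)%nat /\ F i x) <= sumR n (fun i => m (F i)).
Proof.
  induction n; intros HF; simpl.
  - rewrite finite_union_0, meas_empty. lra.
  - rewrite finite_union_S.
    eapply Rle_trans. apply meas_union2_le; auto.
    apply Borel_finite_union; intros; apply HF; lia.
    specialize (IHn ltac:(intros; apply HF; lia)). lra.
Qed.

Lemma meas_finite_union n (F : nat -> R -> Prop) :
  (forall i, (i < n)%nat -> Borel (F i)) ->
  (forall i p x, (i < n)%nat -> (p < n)%nat -> i <> p -> F i x -> F p x -> False) ->
  m (fun x => exists i, (i < n)%nat /\ F i x) = sumR n (fun i => m (F i)).
Proof.
  induction n; intros HF Hd; simpl.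
  - rewrite finite_union_0. apply meas_empty.
  - rewrite finite_union_S, meas_union2.
    + rewrite IHn; auto. intros i p x Hi Hp; apply Hd; lia.
    + apply Borel_finite_union; intros; apply HF; lia.
    + apply HF; lia.
    + intros x [i [Hi H1]] H2. apply (Hd i n x); auto; lia.
Qed.

Lemma meas_partition k X : Borel X -> m X = sumR (2 ^ k) (fun j => m (inter X (dyad k j))).
Proof.
  intros HX. rewrite <- meas_finite_union.
  - f_equal. apply set_ext. intros x; split.
    + intros H. destruct (dyad_exists x k (Borel_in_unit _ HX _ H)) as [j [Hv Hd]].
      exists j. split; [exact Hv | split; auto].
    + intros [i [_ [H _]]]; auto.
  - intros i Hi. apply Borel_inter; auto. apply Borel_dyad. auto.
  - intros i p x _ _ Hip [_ H1] [_ H2]. apply Hip. eapply dyad_index_unique; eauto.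
Qed.

Lemma meas_unit_partition k : m (fun x => 0 <= x < 1) = sumR (2 ^ k) (fun j => m (dyad k j)).
Proof.
  rewrite (meas_partition k _ Borel_unit). apply sumR_ext. intros j Hj. f_equal.
  apply set_ext. intros x; split.
  - intros [_ H]; auto.
  - intros H. split; auto. eapply dyad_in_unit; eauto.
Qed.

Lemma meas_children k j : valid k j ->
  m (dyad k j) = m (dyad (S k) (2 * j)) + m (dyad (S k) (2 * j + 1)).
Proof.
  intros Hv. destruct (valid_children _ _ Hv).
  rewrite <- meas_union2; auto using Borel_dyad.
  - f_equal. apply set_ext. intros x. split. apply dyad_children_cover. apply dyad_children_incl.
  - intros x H1 H2. pose proof (dyad_index_unique _ _ _ _ H1 H2). lia.
Qed.

Section IncreasingUnion.

Variable A : nat -> R -> Prop.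
Hypothesis HA : forall n, Borel (A n).
Hypothesis HAinc : forall n, incl (A n) (A (S n)).

Lemma meas_increasing_union eps : 0 < eps ->
  exists N, m (fun x => exists n, A n x) <= m (A N) + eps.
Proof.
  assert (Hmon : forall n p, (n <= p)%nat -> incl (A n) (A p)).
  { intros n p Hnp. induction Hnp. intros x; auto. intros x Hx; apply HAinc; auto. }
  (* the successive differences [P n] are disjoint, with partial unions [A n] *)
  set (P := fun n => match n with O => A O | S n' => fun x => A n x /\ ~ A n' x end).
  assert (HPB : forall n, Borel (P n)) by (intros [|n]; simpl; auto using Borel_diff).
  assert (Hsum : forall n, sum_f_R0 (fun i => m (P i)) n = m (A n)).
  { induction n; simpl; auto. rewrite IHn, meas_diff; auto. lra. }
  assert (HU : (fun x => exists n, P n x) = (fun x => exists n, A n x)).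
  { apply set_ext; intros x; split.
    - intros [[|n] H]; simpl in H; [exists O|exists (S n)]; tauto.
    - intros [n H]. induction n. exists O; auto.
      destruct (classic (A n x)). auto. exists (S n). simpl; tauto. }
  assert (Hd : forall n p x, n <> p -> P n x -> P p x -> False).
  { assert (forall n p x, (n < p)%nat -> P n x -> P p x -> False).
    { intros n [|p] x Hnp H1 H2. lia. destruct H2 as [_ H2]. apply H2, (Hmon n p). lia.
      destruct n; simpl in H1; tauto. }
    intros n p x Hnp H1 H2. destruct (Nat.lt_total n p) as [Hl|[He|Hl]]; eauto. }
  pose proof (proj2 Hm P HPB Hd) as Hinf. rewrite HU in Hinf.
  intros Heps. destruct (Hinf eps Heps) as [N HN]. exists N.
  specialize (HN N ltac:(lia)). rewrite Hsum in HN. unfold Rdist in HN.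
  apply Rabs_def2 in HN. lra.
Qed.

Lemma meas_increasing_union_le M : (forall n, m (A n) <= M) ->
  m (fun x => exists n, A n x) <= M.
Proof.
  intros HM. destruct (Rle_dec (m (fun x => exists n, A n x)) M) as [|ne]; auto.
  destruct (meas_increasing_union ((m (fun x => exists n, A n x) - M) / 2)) as [N HN]. lra.
  specialize (HM N). lra.
Qed.

End IncreasingUnion.

Lemma meas_countable_union_null (A : nat -> R -> Prop) :
  (forall n, Borel (A n)) -> (forall n, m (A n) = 0) -> m (fun x => exists n, A n x) = 0.
Proof.
  intros HA H0.
  replace (fun x => exists n, A n x) with
    (fun x => exists N, (fun N x => exists i, (i < N)%nat /\ A i x) N x).
  - apply Rle_antisym.
    + apply meas_increasing_union_le.
      * intros N. apply Borel_finite_union; auto.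
      * intros N x [i [Hi Hx]]. exists i; split; auto.
      * intros N. eapply Rle_trans. apply meas_finite_union_le; auto.
        rewrite (sumR_ext _ _ (fun _ => 0)), sumR_const0; auto. lra.
    + apply meas_nonneg, Borel_union. intros N. apply Borel_finite_union; auto.
  - apply set_ext; intros x; split.
    + intros [N [i [_ H]]]; exists i; auto.
    + intros [i H]. exists (S i), i. auto.
Qed.

End FiniteMeasure.

(** * Outer regularity *)

(* Unions of dyadic intervals play the role of open sets in the regularity argument. *)
Definition dyadic_open (U : R -> Prop) : Prop :=
  forall x, U x -> exists k j, valid k j /\ dyad k j x /\ incl (dyad k j) U.

Definition compl (A : R -> Prop) : R -> Prop := fun x => 0 <= x < 1 /\ ~ A x.

Lemma dyadic_open_in_unit U : dyadic_open U -> forall x, U x -> 0 <= x < 1.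
Proof. intros H x Hx. destruct (H x Hx) as [k [j [Hv [Hd _]]]]. eapply dyad_in_unit; eauto. Qed.

Lemma Borel_dyadic_open U : dyadic_open U -> Borel U.
Proof.
  intros H. eapply Borel_ext. apply (Borel_dyadic_union (fun k j => incl (dyad k j) U)).
  intros x; split.
  - intros [k [j [Hi [_ Hd]]]]. auto.
  - intros Hx. destruct (H x Hx) as [k [j [Hv [Hd Hi]]]]. exists k, j; auto.
Qed.

Lemma dyadic_open_unit : dyadic_open (fun x => 0 <= x < 1).
Proof.
  intros x Hx. exists O, O. assert (Hv : valid 0 0) by (unfold valid; simpl; lia).
  split; auto. split.
  - rewrite dyad_scaled; simpl; lra.
  - intros y Hy. eapply dyad_in_unit; eauto.
Qed.

Lemma dyadic_open_dyad k j : valid k j -> dyadic_open (dyad k j).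
Proof. intros Hv x Hx. exists k, j. split; auto. split; auto. intros y; auto. Qed.

Lemma dyadic_open_compl_dyad k j : valid k j -> dyadic_open (compl (dyad k j)).
Proof.
  intros Hv x [Hx Hn]. destruct (dyad_exists x k Hx) as [j' [Hv' Hd']].
  exists k, j'. split; auto. split; auto. intros y Hy. split. eapply dyad_in_unit; eauto.
  intros Hy'. apply Hn. rewrite (dyad_index_unique _ _ _ _ Hy' Hy). auto.
Qed.

Lemma dyadic_open_inter U V : dyadic_open U -> dyadic_open V -> dyadic_open (inter U V).
Proof.
  intros HU HV x [Hu Hv].
  destruct (HU x Hu) as [k1 [j1 [_ [Hd1 Hi1]]]].
  destruct (HV x Hv) as [k2 [j2 [_ [Hd2 Hi2]]]].
  destruct (dyad_exists x (Nat.max k1 k2) (dyadic_open_in_unit U HU x Hu)) as [j [Hv' Hd]].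
  exists (Nat.max k1 k2), j. split; auto. split; auto.
  intros y Hy. split.
  - apply Hi1. eapply dyad_nested. 2: apply Hd. lia. apply Hd1. auto.
  - apply Hi2. eapply dyad_nested. 2: apply Hd. lia. apply Hd2. auto.
Qed.

Lemma dyadic_open_union (U : nat -> R -> Prop) :
  (forall n, dyadic_open (U n)) -> dyadic_open (fun x => exists n, U n x).
Proof.
  intros H x [n Hx]. destruct (H n x Hx) as [k [j [Hv [Hd Hi]]]].
  exists k, j. split; auto. split; auto. intros y Hy. exists n; auto.
Qed.

Lemma Borel_complement A : Borel A -> Borel (compl A).
Proof. apply Borel_compl. Qed.

Lemma compl_involutive A : Borel A -> compl (compl A) = A.
Proof.
  intros HA. apply set_ext; intros x. unfold compl. split.
  - intros [H1 H2]. apply NNPP. tauto.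
  - intros H. pose proof (Borel_in_unit A HA x H). tauto.
Qed.

Lemma choice_nat (P : nat -> (R -> Prop) -> Prop) :
  (forall n, exists U, P n U) -> exists F : nat -> R -> Prop, forall n, P n (F n).
Proof.
  intros H. exists (fun n => proj1_sig (constructive_indefinite_description _ (H n))).
  intros n. exact (proj2_sig (constructive_indefinite_description _ (H n))).
Qed.

Section Regularity.

Variable m : (R -> Prop) -> R.
Hypothesis Hm : finite_measure m.

Definition outer_regular (A : R -> Prop) : Prop :=
  forall eps, 0 < eps -> exists U, dyadic_open U /\ incl A U /\ m U <= m A + eps.

Lemma outer_regular_dyadic_open U : dyadic_open U -> outer_regular U.
Proof. intros HU eps Heps. exists U. split; auto. split. intros x; auto. lra. Qed.

Lemma outer_regular_union (A : nat -> R -> Prop) :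
  (forall n, Borel (A n)) -> (forall n, outer_regular (A n)) ->
  outer_regular (fun x => exists n, A n x).
Proof.
  intros HA IH eps Heps.
  (* cover [A n] with an open [U n] of excess at most [eps / 2^(n+1)] *)
  destruct (choice_nat (fun n U => dyadic_open U /\ incl (A n) U /\ m U <= m (A n) + eps / 2 ^ (S n)))
    as [U HU].
  { intros n. apply IH. apply Rdiv_lt_0_compat; auto. apply pow2_pos. }
  assert (HUB : forall n, Borel (U n)) by (intros n; apply Borel_dyadic_open, HU).
  assert (HAU : Borel (fun x => exists n, A n x)) by (apply Borel_union; auto).
  assert (HUU : Borel (fun x => exists n, U n x)) by (apply Borel_union; auto).
  exists (fun x => exists n, U n x). split. apply dyadic_open_union. intros n; apply HU.
  assert (Hsub : incl (fun x => exists n, A n x) (fun x => exists n, U n x)).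
  { intros x [n Hx]. exists n. apply HU; auto. }
  split; auto.
  set (W := fun n x => U n x /\ ~ A n x).
  assert (HWB : forall n, Borel (W n)) by (intros n; apply Borel_diff; auto).
  assert (HW : forall n, m (W n) <= eps / 2 ^ S n).
  { intros n. unfold W. rewrite meas_diff; auto. destruct (HU n) as [_ [_ H]]. lra. apply HU. }
  assert (HWinf : m (fun x => exists n, W n x) <= eps).
  { replace (fun x => exists n, W n x) with
      (fun x => exists N, (fun N x => exists i, (i < N)%nat /\ W i x) N x).
    - apply meas_increasing_union_le; auto.
      + intros N. apply Borel_finite_union; auto.
      + intros N x [i [Hi Hx]]. exists i; split; auto.
      + intros N. eapply Rle_trans. apply meas_finite_union_le; auto.
        eapply Rle_trans. apply (sumR_le _ _ (fun i => eps / 2 ^ S i)); auto.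
        rewrite sumR_geometric.
        pose proof (pow2_pos N). assert (0 < eps / 2 ^ N) by (apply Rdiv_lt_0_compat; auto). lra.
    - apply set_ext; intros x; split.
      + intros [N [i [_ H]]]; exists i; auto.
      + intros [i H]. exists (S i), i. split; auto. }
  assert (Hdiff : m (fun x => (exists n, U n x) /\ ~ (exists n, A n x)) <= m (fun x => exists n, W n x)).
  { apply meas_mono; auto using Borel_diff. apply Borel_union; auto.
    intros x [[n Hn] Hx]. exists n. split; auto. intros H; apply Hx. exists n; auto. }
  rewrite meas_diff in Hdiff; auto. lra.
Qed.

Lemma meas_compl X : Borel X -> m (compl X) = m (fun x => 0 <= x < 1) - m X.
Proof. intros HX. apply meas_diff; auto using Borel_unit. intros x. apply Borel_in_unit, HX. Qed.

Lemma outer_regular_inter X Y : Borel X -> Borel Y ->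
  outer_regular X -> outer_regular Y -> outer_regular (inter X Y).
Proof.
  intros HX HY RX RY eps Heps.
  destruct (RX (eps / 2)) as [U [HU [HXU HmU]]]; [lra|].
  destruct (RY (eps / 2)) as [V [HV [HYV HmV]]]; [lra|].
  assert (HUB : Borel U) by (apply Borel_dyadic_open; auto).
  assert (HVB : Borel V) by (apply Borel_dyadic_open; auto).
  exists (inter U V). split; [apply dyadic_open_inter; auto|].
  split; [intros x [Hx Hy]; split; auto|].
  assert (Hcov : m (inter U V) <=
                 m (inter X Y) + m (fun x => (U x /\ ~ X x) \/ (V x /\ ~ Y x))).
  { apply meas_cover_le; auto using Borel_inter, Borel_union2, Borel_diff.
    intros x [Hu Hv]. unfold inter. destruct (classic (X x)); destruct (classic (Y x)); tauto. }
  pose proof (meas_union2_le m Hm _ _ (Borel_diff _ _ HUB HX) (Borel_diff _ _ HVB HY)) as Hsub.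
  cbv beta in Hsub. rewrite (meas_diff m Hm U X), (meas_diff m Hm V Y) in Hsub; auto. lra.
Qed.

Lemma outer_regular_compl_finite_union (A : nat -> R -> Prop) N :
  (forall n, Borel (A n)) -> (forall n, outer_regular (compl (A n))) ->
  outer_regular (compl (fun x => exists i, (i < N)%nat /\ A i x)).
Proof.
  intros HA IH. induction N.
  - rewrite finite_union_0.
    replace (compl (fun _ => False)) with (fun x => 0 <= x < 1) by (apply set_ext; unfold compl; tauto).
    apply outer_regular_dyadic_open, dyadic_open_unit.
  - rewrite finite_union_S.
    replace (compl (fun x => (exists i, (i < N)%nat /\ A i x) \/ A N x))
      with (inter (compl (fun x => exists i, (i < N)%nat /\ A i x)) (compl (A N)))
      by (apply set_ext; unfold inter, compl; tauto).
    apply outer_regular_inter; auto using Borel_complement.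
    apply Borel_complement, Borel_finite_union. auto.
Qed.

Lemma outer_regular_compl_union (A : nat -> R -> Prop) :
  (forall n, Borel (A n)) -> (forall n, outer_regular (compl (A n))) ->
  outer_regular (compl (fun x => exists n, A n x)).
Proof.
  intros HA IH eps Heps.
  set (FN := fun N x => exists i, (i < N)%nat /\ A i x).
  assert (HFN : forall N, Borel (FN N)) by (intros N; apply Borel_finite_union; auto).
  assert (HU : Borel (fun x => exists n, A n x)) by (apply Borel_union; auto).
  (* the union is, up to [eps / 2], a finite union *)
  destruct (meas_increasing_union m Hm FN HFN) with (eps := eps / 2) as [N HN].
  { intros N x [i [Hi Hx]]. exists i; split; auto. }
  { lra. }
  replace (fun x => exists n, FN n x) with (fun x => exists n, A n x) in HN.
  2: { apply set_ext; intros x; split.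
       - intros [i H]. exists (S i), i; auto.
       - intros [n [i [_ H]]]. exists i; auto. }
  destruct (outer_regular_compl_finite_union A N HA IH (eps / 2)) as [V [HV [HiV HmV]]]; [lra|].
  exists V. split; auto. split.
  - intros x [Hx Hn]. apply HiV. split; auto. intros [i [_ H]]. apply Hn. exists i; auto.
  - fold (FN N) in HmV. rewrite meas_compl in *; auto. lra.
Qed.

Lemma Borel_outer_regular A : Borel A -> outer_regular A /\ outer_regular (compl A).
Proof.
  induction 1 as [k j Hv | A HA [IH1 IH2] | A HA IH].
  - split; apply outer_regular_dyadic_open; auto using dyadic_open_dyad, dyadic_open_compl_dyad.
  - fold (compl A). rewrite compl_involutive; auto.
  - split.
    + apply outer_regular_union; auto. intros n; apply IH.
    + apply outer_regular_compl_union; auto. intros n; apply IH.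
Qed.

End Regularity.

Section DensityBound.

Variables (mu nu : (R -> Prop) -> R) (c : R) (G : R -> Prop).
Hypotheses (Hmu : finite_measure mu) (Hnu : finite_measure nu) (Hc : 0 <= c) (HG : Borel G).
Hypothesis Hdens : forall k j, valid k j -> mu (inter G (dyad k j)) <= c * nu (dyad k j).

Lemma density_bound_dyadic_open U : dyadic_open U -> mu (inter U G) <= c * nu U.
Proof.
  intros HU.
  (* exhaust [U] by the unions [Uk k] of its level-[k] dyadic subintervals *)
  set (Uk := fun k x => exists j, incl (dyad k j) U /\ valid k j /\ dyad k j x).
  assert (HUkB : forall k, Borel (Uk k)) by (intros k; apply Borel_dyadic_level).
  assert (HUB : Borel U) by (apply Borel_dyadic_open; auto).
  assert (HUk : forall k, incl (Uk k) U) by (intros k x [j [Hi [_ Hd]]]; auto).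
  replace (inter U G) with (fun x => exists k, inter (Uk k) G x).
  2: { apply set_ext; intros x; split.
       - intros [k [H1 H2]]. split; auto. apply (HUk k); auto.
       - intros [H1 H2]. destruct (HU x H1) as [k [j [Hv [Hd Hi]]]].
         exists k. split; auto. exists j; auto. }
  apply meas_increasing_union_le; auto.
  { intros k. apply Borel_inter; auto. }
  { intros k x [[j [Hi [Hv Hd]]] Hg]. split; auto.
    destruct (valid_children _ _ Hv) as [V1 V2].
    destruct (dyad_children_cover _ _ _ Hd) as [Hc'|Hc']; eexists; (split; [|split; [|apply Hc']]);
      auto; intros y Hy; apply Hi; apply dyad_children_incl; auto. }
  intros k.
  rewrite (meas_partition mu Hmu k); [| apply Borel_inter; auto].
  apply Rle_trans with (c * nu (Uk k)).
  2: { apply Rmult_le_compat_l; auto. apply meas_mono; auto. }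
  rewrite (meas_partition nu Hnu k); auto. rewrite <- sumR_scal. apply sumR_le.
  intros j Hv.
  destruct (classic (incl (dyad k j) U)) as [Hi|Hi].
  - replace (inter (Uk k) (dyad k j)) with (dyad k j).
    2: { apply set_ext; intros x; split. intros H. split; auto. exists j; auto. intros [_ H]; auto. }
    eapply Rle_trans. 2: apply Hdens; auto.
    apply meas_mono; auto using Borel_inter, Borel_dyad.
    intros x [[_ Hg] Hd]. split; auto.
  - rewrite meas_null; auto.
    + apply Rmult_le_pos; auto. apply meas_nonneg; auto using Borel_inter, Borel_dyad.
    + intros x [[[j' [Hi' [_ Hd']]] _] Hd]. apply Hi. rewrite (dyad_index_unique _ _ _ _ Hd Hd'). auto.
Qed.

Lemma density_bound_Borel B : Borel B -> mu (inter B G) <= c * nu B.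
Proof.
  intros HB. apply Rle_of_le_plus_eps. intros eta Heta.
  destruct (proj1 (Borel_outer_regular nu Hnu B HB) (eta / (c + 1))) as [U [HU [HiU HmU]]].
  { apply Rdiv_lt_0_compat; lra. }
  assert (HUB : Borel U) by (apply Borel_dyadic_open; auto).
  assert (Hle : mu (inter B G) <= mu (inter U G)).
  { apply meas_mono; auto using Borel_inter. intros x [H1 H2]. split; auto. }
  pose proof (density_bound_dyadic_open U HU).
  assert (c * nu U <= c * (nu B + eta / (c + 1))) by (apply Rmult_le_compat_l; auto).
  assert (c * (eta / (c + 1)) <= eta).
  { apply Rmult_le_reg_r with (c + 1). lra.
    replace (c * (eta / (c + 1)) * (c + 1)) with (c * eta) by (field; lra). nra. }
  lra.
Qed.

End DensityBound.

Section Tree.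

Variables (T : nat -> nat -> Prop) (kt jt : nat).
Hypothesis Htree : is_tree T kt jt.

Lemma tree_valid k j : T k j -> valid k j.
Proof. apply Htree. Qed.

Lemma tree_level k j : T k j -> (kt <= k)%nat.
Proof. intros HT. eapply dyad_incl_level, Htree, HT. Qed.

Lemma tree_top_index j : T kt j -> j = jt.
Proof.
  intros HT. eapply dyad_index_unique. apply dyad_left_end.
  apply (proj1 (proj2 (proj2 (proj2 Htree))) _ _ HT), dyad_left_end.
Qed.

Lemma tree_parent d j : T (kt + S d)%nat j -> T (kt + d)%nat (j / 2).
Proof.
  intros HT. destruct Htree as [Hv [Hc [Htop [Hin _]]]].
  rewrite Nat.add_succ_r in *.
  apply (Hc (S (kt + d)) j kt jt); auto.
  - specialize (Hv _ _ HT). unfold valid in *. rewrite Nat.pow_succ_r' in Hv.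
    apply Nat.Div0.div_lt_upper_bound. lia.
  - intros y Hy. apply dyad_parent. auto.
  - pose proof (dyad_left_end (S (kt + d)) j) as Hx.
    eapply dyad_nested. 2: apply dyad_parent, Hx. lia. apply (Hin _ _ HT _ Hx).
Qed.

Lemma tree_children k j : T k j -> ~ leaf T k j -> T (S k) (2 * j) /\ T (S k) (2 * j + 1).
Proof.
  intros HT Hl. pose proof (proj2 (proj2 (proj2 (proj2 Htree))) k j HT).
  unfold leaf in Hl. destruct (classic (T (S k) (2 * j))); tauto.
Qed.

Lemma tree_child_not_top k j c : T k j -> (S k, c) <> (kt, jt).
Proof. intros HT E. injection E. intros. pose proof (tree_level _ _ HT). lia. Qed.

Lemma boundary_tree_interval x n : boundary T kt jt x -> (kt <= n)%nat ->
  exists j, T n j /\ dyad n j x.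
Proof.
  intros [Hx Hl] Hn. pose proof Htree as [_ [_ [Htop _]]].
  replace n with (kt + (n - kt))%nat by lia. generalize (n - kt)%nat as d. clear Hn n.
  induction d as [|d [j [HT Hd]]].
  - exists jt. rewrite Nat.add_0_r. auto.
  - assert (Hnl : ~ leaf T (kt + d) j) by (intros Hlf; apply Hl; exists (kt + d)%nat, j; auto).
    destruct (tree_children _ _ HT Hnl).
    rewrite Nat.add_succ_r.
    destruct (dyad_children_cover _ _ _ Hd) as [E|E]; eexists; split; [| apply E | | apply E]; auto.
Qed.

Lemma leaf_no_deeper k j k' j' x : leaf T k j -> T k' j' ->
  dyad k j x -> dyad k' j' x -> (k < k')%nat -> False.
Proof.
  intros [HT [N1 N2]] HT' Hd Hd' Hk.
  destruct Htree as [_ [Hc _]].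
  destruct (valid_children _ _ (tree_valid _ _ HT)) as [V1 V2].
  destruct (dyad_children_cover _ _ _ Hd) as [Hx|Hx]; [apply N1 | apply N2];
    (apply (Hc k' j' k j); auto; [eapply dyad_nested; eauto; lia
                                 | intros y Hy; apply dyad_children_incl; auto]).
Qed.

Definition leaves_at (k : nat) : R -> Prop :=
  fun x => exists j, leaf T k j /\ valid k j /\ dyad k j x.

Lemma leaves_at_disjoint k k' x : k <> k' -> leaves_at k x -> leaves_at k' x -> False.
Proof.
  intros Hk [j [Hl [_ Hd]]] [j' [Hl' [_ Hd']]].
  destruct (Nat.lt_total k k') as [H|[H|H]]; try lia.
  - exact (leaf_no_deeper k j k' j' x Hl (proj1 Hl') Hd Hd' H).
  - exact (leaf_no_deeper k' j' k j x Hl' (proj1 Hl) Hd' Hd H).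
Qed.

Lemma Borel_leaves_at k : Borel (leaves_at k).
Proof. apply Borel_dyadic_level. Qed.

Lemma Borel_top : Borel (dyad kt jt).
Proof. apply Borel_dyad, tree_valid, Htree. Qed.

Lemma Borel_leaves_union : Borel (leaves_union T).
Proof.
  eapply Borel_ext. apply (Borel_dyadic_union (leaf T)).
  intros x; split.
  - intros [k [j [H [_ Hd]]]]. exists k, j; auto.
  - intros [k [j [H Hd]]]. exists k, j. split; auto. split; auto. apply tree_valid, H.
Qed.

Lemma Borel_boundary : Borel (boundary T kt jt).
Proof. apply Borel_diff. apply Borel_top. apply Borel_leaves_union. Qed.

Section Doubling.

Variables (s : (R -> Prop) -> R) (D : R).
Hypotheses (Htop : 0 < s (dyad kt jt)) (HD : 1 <= D) (Hdb : doubling s T kt jt D).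

Lemma doubling_pos k j : T k j -> 0 < s (dyad k j).
Proof.
  intros HT. pose proof (tree_level _ _ HT) as Hk.
  replace k with (kt + (k - kt))%nat in * by lia. clear Hk.
  revert j HT. generalize (k - kt)%nat as d. intros d. induction d; intros j HT.
  - rewrite Nat.add_0_r in *. rewrite (tree_top_index _ HT). auto.
  - specialize (IHd _ (tree_parent _ _ HT)).
    specialize (Hdb _ _ HT). replace (kt + S d - 1)%nat with (kt + d)%nat in Hdb by lia.
    assert (s (dyad (kt + d) (j / 2)) <= D * s (dyad (kt + S d) j)).
    { apply Hdb. intros E. injection E. lia. }
    destruct (Rle_dec (s (dyad (kt + S d) j)) 0); [|lra].
    assert (D * s (dyad (kt + S d) j) <= 0) by nra. lra.
Qed.

Lemma doubling_children k j : T k j -> ~ leaf T k j ->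
  s (dyad k j) <= D * s (dyad (S k) (2 * j)) /\ s (dyad k j) <= D * s (dyad (S k) (2 * j + 1)).
Proof.
  intros HT Hl. destruct (tree_children _ _ HT Hl) as [H1 H2].
  pose proof (Hdb _ _ H1 (tree_child_not_top _ _ _ HT)) as E1.
  pose proof (Hdb _ _ H2 (tree_child_not_top _ _ _ HT)) as E2.
  replace (S k - 1)%nat with k in E1, E2 by lia.
  replace (2 * j / 2)%nat with j in E1 by (rewrite Nat.mul_comm, Nat.div_mul; lia).
  replace ((2 * j + 1) / 2)%nat with j in E2
    by (rewrite Nat.mul_comm, Nat.div_add_l by lia; simpl; lia).
  auto.
Qed.

End Doubling.

End Tree.

(** * The stopping-time estimate *)

(* With [X = m1 n2 - m2 n1], the left side exceeds [(m1+m2)^2/(n1+n2)] by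
   [X^2 / (n1 n2 (n1+n2))], while the last term equals [D^2 X^2 / (n1+n2)^3];
   doubling of [n] gives [(n1+n2)^2 <= D^2 n1 n2]. *)
Lemma sq_ratio_split m1 m2 n1 n2 D : 0 < m1 + m2 -> 0 < n1 -> 0 < n2 ->
  n1 + n2 <= D * n1 -> n1 + n2 <= D * n2 ->
  m1 * (m1 / n1) + m2 * (m2 / n2) <=
  (m1 + m2) * ((m1 + m2) / (n1 + n2)) +
  D ^ 2 * ((m1 / (m1 + m2) - n1 / (n1 + n2)) ^ 2 * (m1 + m2)) * ((m1 + m2) / (n1 + n2)).
Proof.
  intros Hm Hn1 Hn2 H1 H2.
  set (X := m1 * n2 - m2 * n1).
  assert (E1 : m1 * (m1 / n1) + m2 * (m2 / n2) =
               (m1 + m2) * ((m1 + m2) / (n1 + n2)) + X ^ 2 / (n1 * n2 * (n1 + n2)))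
    by (unfold X; field; lra).
  assert (E2 : D ^ 2 * ((m1 / (m1 + m2) - n1 / (n1 + n2)) ^ 2 * (m1 + m2)) * ((m1 + m2) / (n1 + n2))
               = D ^ 2 * X ^ 2 / (n1 + n2) ^ 3)
    by (unfold X; field; lra).
  assert (E3 : X ^ 2 / (n1 * n2 * (n1 + n2)) - D ^ 2 * X ^ 2 / (n1 + n2) ^ 3 =
               (X ^ 2 * ((n1 + n2) ^ 2 - D ^ 2 * (n1 * n2))) * / (n1 * n2 * (n1 + n2) ^ 3))
    by (field; lra).
  assert (Hq : (n1 + n2) * (n1 + n2) <= (D * n1) * (D * n2)) by (apply Rmult_le_compat; lra).
  assert (Ha : X ^ 2 * ((n1 + n2) ^ 2 - D ^ 2 * (n1 * n2)) <= 0).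
  { pose proof (pow2_ge_0 X).
    assert ((n1 + n2) ^ 2 - D ^ 2 * (n1 * n2) <= 0) by (simpl; nra). nra. }
  assert (Hb : 0 < / (n1 * n2 * (n1 + n2) ^ 3)).
  { apply Rinv_0_lt_compat. repeat apply Rmult_lt_0_compat; try lra; apply pow_lt; lra. }
  rewrite E1, E2. nra.
Qed.

Section TreeMeasures.

Variables (T : nat -> nat -> Prop) (kt jt : nat) (mu nu : (R -> Prop) -> R) (D : R).
Hypotheses (Htree : is_tree T kt jt) (Hmu : finite_measure mu) (Hnu : finite_measure nu).
Hypotheses (HAmu : 0 < mu (dyad kt jt)) (HAnu : 0 < nu (dyad kt jt)) (HD : 1 <= D).
Hypotheses (HBmu : doubling mu T kt jt D) (HBnu : doubling nu T kt jt D).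

Let Tvalid := tree_valid T kt jt Htree.
Let Tchildren := tree_children T kt jt Htree.
Let mu_pos := doubling_pos T kt jt Htree mu D HAmu HD HBmu.
Let nu_pos := doubling_pos T kt jt Htree nu D HAnu HD HBnu.

Definition ratio k j := mu (dyad k j) / nu (dyad k j).

Lemma ratio_nonneg k j : T k j -> 0 <= ratio k j.
Proof. intros HT. apply Rlt_le, Rdiv_lt_0_compat; auto. Qed.

(* Descending at most [e] generations from [I_{k,j}] through the tree and stopping at the
   first interval with [mu/nu > t]: [stopped_mass] is the [mu]-mass of the stopping
   intervals, [stopped_energy] the sum of [Delta^2 mu] over the intervals crossed. *)
Fixpoint stopped_mass (t : R) (e k j : nat) {struct e} : R :=
  if Rlt_dec t (ratio k j) then mu (dyad k j) else
  match e with
  | O => 0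
  | S e' => if excluded_middle_informative (leaf T k j) then 0 else
            stopped_mass t e' (S k) (2 * j) + stopped_mass t e' (S k) (2 * j + 1)
  end.

Fixpoint stopped_energy (t : R) (e k j : nat) {struct e} : R :=
  if Rlt_dec t (ratio k j) then 0 else
  match e with
  | O => 0
  | S e' => if excluded_middle_informative (leaf T k j) then 0 else
            Defs.Delta mu nu k j ^ 2 * mu (dyad k j) +
            stopped_energy t e' (S k) (2 * j) + stopped_energy t e' (S k) (2 * j + 1)
  end.

Lemma stopped_energy_nonneg t e k j : T k j -> 0 <= stopped_energy t e k j.
Proof.
  revert k j. induction e; intros k j HT; cbn [stopped_energy].
  - destruct (Rlt_dec t (ratio k j)); lra.
  - destruct (Rlt_dec t (ratio k j)); [lra|].
    destruct (excluded_middle_informative (leaf T k j)) as [|Hl]; [lra|].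
    destruct (Tchildren _ _ HT Hl) as [H1 H2].
    pose proof (IHe _ _ H1). pose proof (IHe _ _ H2).
    pose proof (mu_pos _ _ HT). pose proof (pow2_ge_0 (Defs.Delta mu nu k j)).
    assert (0 <= Defs.Delta mu nu k j ^ 2 * mu (dyad k j)) by (apply Rmult_le_pos; lra). lra.
Qed.

(* The potential [mu(I)^2 / nu(I)] drops by a factor [t] at a stopping interval and grows by
   at most [D^2 t Delta^2 mu(I)] from an unstopped interval to its children. *)
Lemma stopped_mass_bound t e k j : 0 < t -> T k j ->
  t * stopped_mass t e k j <= mu (dyad k j) * ratio k j + D ^ 2 * t * stopped_energy t e k j.
Proof.
  intros Ht0. revert k j. induction e; intros k j HT; cbn [stopped_energy stopped_mass];
    pose proof (mu_pos _ _ HT) as Pmk; pose proof (ratio_nonneg _ _ HT) as Pr;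
    assert (Pmr : 0 <= mu (dyad k j) * ratio k j) by (apply Rmult_le_pos; lra);
    (destruct (Rlt_dec t (ratio k j));
     [assert (t * mu (dyad k j) <= ratio k j * mu (dyad k j)) by (apply Rmult_le_compat_r; lra); lra |]).
  - lra.
  - destruct (excluded_middle_informative (leaf T k j)) as [|Hl].
    { pose proof (pow2_ge_0 D). assert (0 <= D ^ 2 * t) by (apply Rmult_le_pos; lra). lra. }
    destruct (Tchildren _ _ HT Hl) as [Tl Tr].
    pose proof (IHe _ _ Tl) as I1. pose proof (IHe _ _ Tr) as I2.
    pose proof (meas_children mu Hmu k j (Tvalid _ _ HT)) as Em.
    pose proof (meas_children nu Hnu k j (Tvalid _ _ HT)) as En.
    destruct (doubling_children T kt jt Htree nu D HBnu k j HT Hl) as [Dn1 Dn2].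
    unfold ratio in *. unfold Defs.Delta. rewrite pow2_abs.
    set (m1 := mu (dyad (S k) (2 * j))) in *. set (m2 := mu (dyad (S k) (2 * j + 1))) in *.
    set (n1 := nu (dyad (S k) (2 * j))) in *. set (n2 := nu (dyad (S k) (2 * j + 1))) in *.
    rewrite Em, En in *.
    pose proof (sq_ratio_split m1 m2 n1 n2 D Pmk (nu_pos _ _ Tl) (nu_pos _ _ Tr) Dn1 Dn2) as C.
    set (dd := (m1 / (m1 + m2) - n1 / (n1 + n2)) ^ 2 * (m1 + m2)) in *.
    set (r := (m1 + m2) / (n1 + n2)) in *.
    assert (0 <= dd) by (unfold dd; apply Rmult_le_pos; [apply pow2_ge_0 | lra]).
    assert (D ^ 2 * dd * r <= D ^ 2 * t * dd).
    { replace (D ^ 2 * t * dd) with (D ^ 2 * dd * t) by ring. apply Rmult_le_compat_l.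
      apply Rmult_le_pos; auto. apply pow2_ge_0. lra. }
    lra.
Qed.

Definition stop_set (t : R) (e k j : nat) : R -> Prop :=
  fun x => boundary T kt jt x /\ dyad k j x /\
    exists n i, (k <= n <= k + e)%nat /\ T n i /\ dyad n i x /\ t < ratio n i.

Lemma Borel_stop_set t e k j : valid k j -> Borel (stop_set t e k j).
Proof.
  intros Hv.
  set (P := fun n i => (k <= n <= k + e)%nat /\ T n i /\ t < ratio n i).
  apply Borel_ext with (A := inter (boundary T kt jt)
    (inter (dyad k j) (fun x => exists n i, P n i /\ valid n i /\ dyad n i x))).
  - apply Borel_inter. apply Borel_boundary, Htree.
    apply Borel_inter. apply Borel_dyad, Hv. apply Borel_dyadic_union.
  - intros x; split.
    + intros [H1 [H2 [n [i [[Hn [HT Hr]] [_ Hd]]]]]].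
      split; [auto | split; [auto | exists n, i; auto]].
    + intros [H1 [H2 [n [i [Hn [HT [Hd Hr]]]]]]]. split; [auto | split; [auto |]].
      exists n, i. split; [unfold P; auto | split; [apply Tvalid, HT | auto]].
Qed.

Lemma meas_stop_set_le t e k j : T k j -> mu (stop_set t e k j) <= stopped_mass t e k j.
Proof.
  revert k j. induction e; intros k j HT; cbn [stopped_mass];
    pose proof (Tvalid _ _ HT) as Hv;
    (destruct (Rlt_dec t (ratio k j));
     [apply meas_mono; auto using Borel_stop_set, Borel_dyad; intros x [_ [H _]]; auto |]).
  - right. apply meas_null; auto.
    intros x [_ [Hd [n' [i [Hn [_ [Hd' Hr]]]]]]].
    replace n' with k in * by lia. rewrite <- (dyad_index_unique _ _ _ _ Hd Hd') in Hr. tauto.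
  - destruct (excluded_middle_informative (leaf T k j)) as [Hl|Hl].
    { right. apply meas_null; auto. intros x [[_ Hb] [Hd _]]. apply Hb. exists k, j; auto. }
    destruct (Tchildren _ _ HT Hl) as [H1 H2].
    destruct (valid_children _ _ Hv) as [V1 V2].
    eapply Rle_trans.
    { apply meas_cover_le with (B := stop_set t e (S k) (2 * j)) (C := stop_set t e (S k) (2 * j + 1));
        auto using Borel_stop_set.
      intros x [Hb [Hd [n' [i [Hn [HTn [Hd' Hr]]]]]]].
      assert (n' <> k).
      { intros E. subst. rewrite <- (dyad_index_unique _ _ _ _ Hd Hd') in Hr. tauto. }
      destruct (dyad_children_cover _ _ _ Hd) as [Hc|Hc]; [left|right]; unfold stop_set;
        (split; [exact Hb|]); (split; [exact Hc|]); exists n', i; (split; [lia|]); auto. }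
    pose proof (IHe _ _ H1). pose proof (IHe _ _ H2). lra.
Qed.

Lemma stopped_energy_level_sum t e k :
  sumR (2 ^ k) (fun j => indic (T k j) (stopped_energy t e k j)) <=
  sumR e (fun m => energy_level mu nu T (k + m)).
Proof.
  revert k. induction e; intros k.
  - cbn [sumR]. rewrite <- (sumR_const0 (2 ^ k)). apply sumR_le. intros i _. unfold indic.
    destruct (excluded_middle_informative (T k i)); cbn [stopped_energy];
      [destruct (Rlt_dec t (ratio k i))|]; lra.
  - rewrite sumR_shift, Nat.add_0_r.
    replace (sumR e (fun m => energy_level mu nu T (k + S m)))
      with (sumR e (fun m => energy_level mu nu T (S k + m)))
      by (apply sumR_ext; intros; f_equal; lia).
    eapply Rle_trans. 2: { apply Rplus_le_compat_l. apply IHe. }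
    rewrite Nat.pow_succ_r', sumR_double. unfold energy_level. rewrite <- sumR_plus.
    apply sumR_le. intros i Hi.
    assert (Hpos : forall c, 0 <= indic (T (S k) c) (stopped_energy t e (S k) c)).
    { intros c. apply indic_nonneg. apply stopped_energy_nonneg. }
    assert (Hd0 : 0 <= indic (T k i /\ ~ leaf T k i) (Defs.Delta mu nu k i ^ 2 * mu (dyad k i))).
    { apply indic_nonneg. intros [HT _]. apply Rmult_le_pos. apply pow2_ge_0.
      apply Rlt_le, mu_pos, HT. }
    pose proof (Hpos (2 * i)%nat). pose proof (Hpos (2 * i + 1)%nat).
    destruct (classic (T k i)) as [HT|HT].
    2: { rewrite indic_false; auto. lra. }
    rewrite indic_true; auto. cbn [stopped_energy].
    destruct (Rlt_dec t (ratio k i)). lra.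
    destruct (excluded_middle_informative (leaf T k i)) as [|Hl]. lra.
    destruct (Tchildren _ _ HT Hl) as [H1 H2].
    rewrite (indic_true (T k i /\ _)); auto. rewrite !indic_true; auto. lra.
Qed.

Lemma energy_level_nonneg n : 0 <= energy_level mu nu T n.
Proof.
  apply sumR_nonneg. intros i _. apply indic_nonneg.
  intros [HT _]. apply Rmult_le_pos. apply pow2_ge_0. apply Rlt_le, mu_pos, HT.
Qed.

Definition high_ratio_upto (c : R) (N : nat) : R -> Prop :=
  fun x => boundary T kt jt x /\
    exists n i, (n <= N)%nat /\ T n i /\ dyad n i x /\ c < ratio n i.

Definition high_ratio_set (c : R) : R -> Prop := fun x => exists N, high_ratio_upto c N x.

Lemma Borel_high_ratio_upto c N : Borel (high_ratio_upto c N).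
Proof.
  apply Borel_ext with (A := inter (boundary T kt jt)
    (fun x => exists n i, ((n <= N)%nat /\ T n i /\ c < ratio n i) /\ valid n i /\ dyad n i x)).
  - apply Borel_inter. apply Borel_boundary, Htree. apply Borel_dyadic_union.
  - intros x; split.
    + intros [H1 [n [i [[H2 [H3 H4]] [_ H5]]]]]. split; auto. exists n, i; auto.
    + intros [H1 [n [i [H2 [H3 [H4 H5]]]]]]. split; auto. exists n, i.
      split; [auto | split; [apply Tvalid, H3 | auto]].
Qed.

Lemma Borel_high_ratio_set c : Borel (high_ratio_set c).
Proof. apply Borel_union. intros N. apply Borel_high_ratio_upto. Qed.

Section HighRatioBound.

Variables (c delta : R) (N : nat).
Hypotheses (HN : (kt <= N)%nat) (Hc : 0 < c) (Hdelta : 0 <= delta).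
Hypothesis Hlow : forall n i, T n i -> (n <= N)%nat -> ratio n i <= c /\ ratio n i <= delta * c.

Lemma meas_high_ratio_in_dyad d j : valid N j ->
  mu (inter (high_ratio_upto c (N + d)) (dyad N j)) <=
  delta * mu (dyad N j) + D ^ 2 * indic (T N j) (stopped_energy c d N j).
Proof.
  intros Hv. pose proof (meas_nonneg mu Hmu _ (Borel_dyad _ _ Hv)).
  destruct (classic (T N j)) as [HT|HT].
  - rewrite indic_true by auto.
    apply Rle_trans with (mu (stop_set c d N j)).
    { apply meas_mono; auto using Borel_inter, Borel_high_ratio_upto, Borel_dyad, Borel_stop_set.
      intros x [[Hb [n [i [Hn [HTn [Hdn Hr]]]]]] Hdx]. split; auto. split; auto.
      exists n, i. split; auto.
      destruct (Nat.le_gt_cases n N) as [Hle|]; [|lia].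
      pose proof (proj1 (Hlow n i HTn Hle)). lra. }
    eapply Rle_trans. apply meas_stop_set_le; auto.
    pose proof (stopped_mass_bound c d N j Hc HT).
    assert (mu (dyad N j) * ratio N j <= mu (dyad N j) * (delta * c))
      by (apply Rmult_le_compat_l; [lra | apply Hlow; auto]).
    apply Rmult_le_reg_l with c; auto. lra.
  - rewrite indic_false by auto. rewrite meas_null; auto.
    + assert (0 <= delta * mu (dyad N j)) by (apply Rmult_le_pos; lra). lra.
    + intros x [[Hb _] Hdx].
      destruct (boundary_tree_interval T kt jt Htree x N Hb HN) as [j' [HT' Hd']].
      apply HT. rewrite (dyad_index_unique _ _ _ _ Hdx Hd'). auto.
Qed.

Lemma meas_high_ratio_upto_le d :
  mu (high_ratio_upto c (N + d)) <=
  delta * mu (fun x => 0 <= x < 1) + D ^ 2 * sumR d (fun m => energy_level mu nu T (N + m)).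
Proof.
  rewrite (meas_partition mu Hmu N _ (Borel_high_ratio_upto _ _)).
  eapply Rle_trans. { apply sumR_le. intros j Hj. apply meas_high_ratio_in_dyad, Hj. }
  rewrite sumR_plus, sumR_scal, sumR_scal, <- meas_unit_partition by auto.
  pose proof (stopped_energy_level_sum c d N).
  assert (0 <= D ^ 2) by apply pow2_ge_0.
  apply Rplus_le_compat_l, Rmult_le_compat_l; auto.
Qed.

Lemma meas_high_ratio_set_le eta :
  (forall d, sumR d (fun m => energy_level mu nu T (N + m)) <= eta) ->
  mu (high_ratio_set c) <= delta * mu (fun x => 0 <= x < 1) + D ^ 2 * eta.
Proof.
  intros Htail.
  replace (high_ratio_set c) with (fun x => exists d, high_ratio_upto c (N + d) x).
  2: { apply set_ext; intros x; split.
       - intros [d H]. exists (N + d)%nat. auto.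
       - intros [n [Hb [n' [i [Hn H]]]]]. exists n. split; auto. exists n', i. split; auto; lia. }
  apply meas_increasing_union_le; auto.
  - intros d. apply Borel_high_ratio_upto.
  - intros d x [Hb [n [i [Hn H]]]]. split; auto. exists n, i. split; auto; lia.
  - intros d. eapply Rle_trans. apply meas_high_ratio_upto_le.
    pose proof (Htail d). assert (0 <= D ^ 2) by apply pow2_ge_0.
    apply Rplus_le_compat_l, Rmult_le_compat_l; auto.
Qed.

End HighRatioBound.

Hypothesis Henergy : exists M, forall n, sumR n (energy_level mu nu T) <= M.

(* Finitely many levels have bounded ratios, and below them the energy tail is small. *)
Lemma high_ratio_set_small eps : 0 < eps -> exists c, 0 <= c /\ mu (high_ratio_set c) <= eps.
Proof.
  intros Heps.
  set (Ftot := mu (fun x => 0 <= x < 1)).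
  assert (HF : 0 <= Ftot) by (apply meas_nonneg, Borel_unit; auto).
  set (delta := eps / (2 * (Ftot + 1))).
  assert (Hdel : 0 < delta) by (apply Rdiv_lt_0_compat; lra).
  assert (HdelF : delta * Ftot <= eps / 2).
  { unfold delta. apply Rmult_le_reg_r with (2 * (Ftot + 1)). lra.
    replace (eps / (2 * (Ftot + 1)) * Ftot * (2 * (Ftot + 1))) with (eps * Ftot) by (field; lra).
    nra. }
  assert (HD2 : 0 < D ^ 2) by (apply pow_lt; lra).
  destruct (sumR_tail_small _ energy_level_nonneg Henergy (eps / (2 * D ^ 2))) as [N HN].
  { apply Rdiv_lt_0_compat; lra. }
  set (N0 := Nat.max N kt).
  destruct (finite_levels_bounded ratio N0) as [M HM].
  destruct (Rexists_scale_above M delta Hdel) as [c [Hc0 [HMc HdcM]]].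
  exists c. split; [lra|].
  eapply Rle_trans.
  - apply (meas_high_ratio_set_le c delta N0); try lia; try lra.
    + intros n i HT Hn. pose proof (HM n i (Tvalid _ _ HT) Hn). lra.
    + intros d. apply HN. lia.
  - replace (D ^ 2 * (eps / (2 * D ^ 2))) with (eps / 2) by (field; lra). fold Ftot. lra.
Qed.

(** * Absolute continuity *)

Lemma high_ratio_compl_density c k j : 0 <= c -> valid k j ->
  mu (inter (fun x => boundary T kt jt x /\ ~ high_ratio_set c x) (dyad k j)) <= c * nu (dyad k j).
Proof.
  intros Hc0 Hv.
  set (G := fun x => boundary T kt jt x /\ ~ high_ratio_set c x).
  assert (HGB : Borel G).
  { apply Borel_diff. apply Borel_boundary, Htree. apply Borel_high_ratio_set. }
  assert (HJ : Borel (dyad k j)) by (apply Borel_dyad; auto).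
  assert (Hratio : forall n i x, T n i -> dyad n i x -> G x -> mu (dyad n i) <= c * nu (dyad n i)).
  { intros n i x HT Hd [Hb Hn].
    assert (Hr : ~ c < ratio n i).
    { intros Hr. apply Hn. exists n. split; auto. exists n, i. auto. }
    unfold ratio in Hr. pose proof (nu_pos _ _ HT).
    apply Rnot_lt_le in Hr. apply (Rmult_le_compat_r (nu (dyad n i))) in Hr; [|lra].
    replace (mu (dyad n i) / nu (dyad n i) * nu (dyad n i)) with (mu (dyad n i)) in Hr
      by (field; lra). auto. }
  assert (Hnu0 : 0 <= c * nu (dyad k j)) by (apply Rmult_le_pos; auto; apply meas_nonneg; auto).
  destruct (classic (exists x, G x /\ dyad k j x)) as [[x [Hg Hd]]|Hno].
  2: { rewrite meas_null; auto. intros x [H1 H2]. apply Hno; eauto. }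
  (* [I_{k,j}] meets [G], so it either lies inside a tree interval or contains the top. *)
  destruct (Nat.le_gt_cases kt k) as [Hk|Hk].
  - destruct (boundary_tree_interval T kt jt Htree x k (proj1 Hg) Hk) as [j' [HT Hd']].
    rewrite (dyad_index_unique _ _ _ _ Hd Hd') in *.
    eapply Rle_trans. apply meas_mono with (B := dyad k j'); auto using Borel_inter.
    intros y [_ H]; apply H.
    eapply Hratio; eauto.
  - pose proof Htree as [_ [_ [Htop _]]].
    assert (Hx : dyad kt jt x) by apply Hg.
    assert (Hi : incl (dyad kt jt) (dyad k j)) by (eapply dyad_nested; eauto; lia).
    pose proof (Borel_top T kt jt Htree) as HtopB.
    eapply Rle_trans. apply meas_mono with (B := dyad kt jt); auto using Borel_inter.
    intros y [[[H _] _] _]; auto.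
    eapply Rle_trans. eapply Hratio; eauto. apply Rmult_le_compat_l; auto.
    apply meas_mono; auto.
Qed.

Lemma boundary_abs_cont : abs_cont (restrict mu (boundary T kt jt)) nu.
Proof.
  intros B HB HnB. unfold restrict.
  assert (HbB : Borel (boundary T kt jt)) by (apply Borel_boundary, Htree).
  apply Rle_antisym; [|apply meas_nonneg; auto using Borel_inter].
  apply Rle_of_le_plus_eps. intros eps Heps.
  destruct (high_ratio_set_small eps Heps) as [c [Hc Hsmall]].
  set (G := fun x => boundary T kt jt x /\ ~ high_ratio_set c x).
  assert (HGB : Borel G) by (apply Borel_diff; auto using Borel_high_ratio_set).
  (* off the high-ratio set, [mu <= c nu] on every dyadic interval, hence on [B] *)
  pose proof (density_bound_Borel mu nu c G Hmu Hnu Hc HGB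
                (fun k j => high_ratio_compl_density c k j Hc) B HB) as Hdens.
  rewrite HnB, Rmult_0_r in Hdens.
  assert (Hcover : mu (inter B (boundary T kt jt)) <= mu (inter B G) + mu (high_ratio_set c)).
  { apply meas_cover_le; auto using Borel_inter, Borel_high_ratio_set.
    intros x [HBx Hbx]. destruct (classic (high_ratio_set c x)); [right | left]; auto.
    split; auto. split; auto. }
  lra.
Qed.

Section NullSet.

Variable B : R -> Prop.
Hypothesis HB : Borel B.

Definition leaf_term (k : nat) : R :=
  sumR (2 ^ k) (fun j => indic (leaf T k j) (nu (dyad k j) / mu (dyad k j) * mu (inter B (dyad k j)))).

Lemma leaf_summand_nonneg k j : leaf T k j -> 0 <= nu (dyad k j) / mu (dyad k j) * mu (inter B (dyad k j)).
Proof.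
  intros [HT _]. apply Rmult_le_pos.
  - apply Rlt_le, Rdiv_lt_0_compat; auto.
  - apply meas_nonneg; auto. apply Borel_inter; auto. apply Borel_dyad, Tvalid, HT.
Qed.

Lemma leaf_term_nonneg k : 0 <= leaf_term k.
Proof. apply sumR_nonneg. intros. apply indic_nonneg, leaf_summand_nonneg. Qed.

Lemma leaf_term_le k : leaf_term k <= nu (leaves_at T k).
Proof.
  rewrite (meas_partition nu Hnu k _ (Borel_leaves_at T k)). apply sumR_le. intros j Hv.
  change (valid k j) in Hv.
  destruct (classic (leaf T k j)) as [Hl|Hl].
  - rewrite indic_true by auto.
    replace (inter (leaves_at T k) (dyad k j)) with (dyad k j).
    2: { apply set_ext; intros x; split. intros H. split; auto. exists j; auto. intros [_ H]; auto. }
    pose proof (mu_pos k j (proj1 Hl)). pose proof (nu_pos k j (proj1 Hl)).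
    assert (Hle : mu (inter B (dyad k j)) <= mu (dyad k j)).
    { apply meas_mono; auto using Borel_inter, Borel_dyad. intros x [_ H']; auto. }
    apply (Rmult_le_compat_l (nu (dyad k j) / mu (dyad k j))) in Hle;
      [| apply Rlt_le, Rdiv_lt_0_compat; auto].
    replace (nu (dyad k j) / mu (dyad k j) * mu (dyad k j)) with (nu (dyad k j)) in Hle
      by (field; lra). auto.
  - rewrite indic_false by auto. apply meas_nonneg; auto using Borel_inter, Borel_dyad, Borel_leaves_at.
Qed.

Lemma leaf_term_summable : infinite_sum leaf_term (series leaf_term).
Proof.
  (* the level sets of leaves are disjoint, so the partial sums stay below [nu [0,1)] *)
  assert (Hpartial : forall n, sum_f_R0 leaf_term n <= nu (fun x => 0 <= x < 1)).
  { intros n. rewrite sum_f_R0_sumR. eapply Rle_trans. apply sumR_le. intros i _. apply leaf_term_le.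
    rewrite <- meas_finite_union; auto using Borel_leaves_at.
    - apply meas_mono; auto using Borel_unit.
      + apply Borel_finite_union. intros. apply Borel_leaves_at.
      + intros x [i [_ [j [_ [Hv Hd]]]]]. eapply dyad_in_unit; eauto.
    - intros i p x _ _ Hip H1 H2. eapply leaves_at_disjoint; eauto. }
  assert (Hgrow : Un_growing (sum_f_R0 leaf_term))
    by (intros n; simpl; pose proof (leaf_term_nonneg (S n)); lra).
  destruct (growing_cv _ Hgrow) as [l Hl].
  { exists (nu (fun x => 0 <= x < 1)). intros y [n ->]. apply Hpartial. }
  unfold series. apply epsilon_spec. exists l. exact Hl.
Qed.

Lemma nuT_null_leaves : nuT mu nu T kt jt B = 0 ->
  nu (inter B (boundary T kt jt)) = 0 /\ forall k j, leaf T k j -> mu (inter B (dyad k j)) = 0.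
Proof.
  intros H0. change (nu (inter B (boundary T kt jt)) + series leaf_term = 0) in H0.
  pose proof leaf_term_summable as Hser.
  assert (Hnb : 0 <= nu (inter B (boundary T kt jt)))
    by (apply meas_nonneg; auto; apply Borel_inter; auto; apply Borel_boundary, Htree).
  assert (HS0 : 0 <= series leaf_term)
    by (pose proof (sum_incr _ 0 _ Hser leaf_term_nonneg); simpl in *; pose proof (leaf_term_nonneg 0); lra).
  split; [lra|].
  intros k j Hl.
  assert (Hk : leaf_term k <= 0).
  { replace 0 with (series leaf_term) by lra. eapply Rle_trans. 2: apply (sum_incr _ k _ Hser leaf_term_nonneg).
    rewrite sum_f_R0_sumR. apply (sumR_term (S k) leaf_term k); auto using leaf_term_nonneg. }
  assert (Hj : nu (dyad k j) / mu (dyad k j) * mu (inter B (dyad k j)) <= leaf_term k).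
  { rewrite <- (indic_true (leaf T k j) (nu (dyad k j) / mu (dyad k j) * mu (inter B (dyad k j)))) by auto.
    apply (sumR_term _ (fun j => indic (leaf T k j)
                            (nu (dyad k j) / mu (dyad k j) * mu (inter B (dyad k j))))).
    - intros; apply indic_nonneg, leaf_summand_nonneg.
    - apply Tvalid, Hl. }
  pose proof (mu_pos k j (proj1 Hl)). pose proof (nu_pos k j (proj1 Hl)).
  assert (0 < nu (dyad k j) / mu (dyad k j)) by (apply Rdiv_lt_0_compat; auto).
  pose proof (leaf_summand_nonneg k j Hl).
  assert (0 <= mu (inter B (dyad k j))).
  { apply meas_nonneg; auto. apply Borel_inter; auto. apply Borel_dyad, Tvalid, Hl. }
  nra.
Qed.

Lemma meas_leaves_union_null : (forall k j, leaf T k j -> mu (inter B (dyad k j)) = 0) ->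
  mu (inter B (leaves_union T)) = 0.
Proof.
  intros Hleaf.
  replace (inter B (leaves_union T)) with (fun x => exists k, inter B (leaves_at T k) x).
  2: { apply set_ext; intros x; split.
       - intros [k [H1 [j [Hl [_ Hd]]]]]. split; auto. exists k, j; auto.
       - intros [H1 [k [j [Hl Hd]]]]. exists k. split; auto. exists j.
         split; auto. split; auto. apply Tvalid, Hl. }
  apply meas_countable_union_null; auto using Borel_inter, Borel_leaves_at.
  intros k. apply Rle_antisym; [| apply meas_nonneg; auto using Borel_inter, Borel_leaves_at].
  rewrite (meas_partition mu Hmu k); auto using Borel_inter, Borel_leaves_at.
  rewrite <- (sumR_const0 (2 ^ k)). apply sumR_le. intros j Hv. change (valid k j) in Hv.
  destruct (classic (leaf T k j)) as [Hl|Hl].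
  - rewrite <- (Hleaf k j Hl). apply meas_mono; auto using Borel_inter, Borel_leaves_at, Borel_dyad.
    intros x [[H1 _] H2]. split; auto.
  - right. apply meas_null; auto. intros x [[_ [j' [Hl' [_ Hd']]]] Hd].
    apply Hl. rewrite (dyad_index_unique _ _ _ _ Hd Hd'). auto.
Qed.

End NullSet.

Lemma top_abs_cont : abs_cont (restrict mu (dyad kt jt)) (nuT mu nu T kt jt).
Proof.
  intros B HB H0. unfold restrict.
  destruct (nuT_null_leaves B HB H0) as [Hnb Hleaf].
  pose proof (boundary_abs_cont _ (Borel_inter _ _ HB (Borel_boundary _ _ _ Htree)) Hnb) as Hmb.
  pose proof (meas_leaves_union_null B HB Hleaf) as Hml.
  assert (HbB : Borel (boundary T kt jt)) by (apply Borel_boundary, Htree).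
  pose proof (Borel_top T kt jt Htree) as HtB.
  pose proof (Borel_leaves_union T kt jt Htree) as HlB.
  apply Rle_antisym; [| apply meas_nonneg; auto using Borel_inter].
  (* the top interval is the boundary together with the leaves *)
  assert (Hcover : mu (inter B (dyad kt jt)) <=
                   mu (inter B (boundary T kt jt)) + mu (inter B (leaves_union T))).
  { apply meas_cover_le; auto using Borel_inter.
    intros x [H1 H2]. destruct (classic (leaves_union T x)); [right | left]; split; auto.
    split; auto. }
  unfold restrict in Hmb. replace (inter (inter B (boundary T kt jt)) (boundary T kt jt))
    with (inter B (boundary T kt jt)) in Hmb by (apply set_ext; unfold inter; tauto).
  lra.
Qed.

End TreeMeasures.

Theorem mainTheorem7
  (T : nat -> nat -> Prop) (kt jt : nat)
  (mu nu : (R -> Prop) -> R) (D : R)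
  (Htree : is_tree T kt jt)
  (Hmu : finite_measure mu) (Hnu : finite_measure nu)
  (HA : 0 < mu (dyad kt jt) /\ 0 < nu (dyad kt jt))
  (HD : 1 <= D)
  (HBmu : doubling mu T kt jt D) (HBnu : doubling nu T kt jt D)
  (Hsum : exists M, forall n, sumR n (energy_level mu nu T) <= M) :
  abs_cont (restrict mu (dyad kt jt)) (nuT mu nu T kt jt) /\
  abs_cont (restrict mu (boundary T kt jt)) nu.
Proof.
  destruct HA as [HAmu HAnu]. split.
  - exact (top_abs_cont T kt jt mu nu D Htree Hmu Hnu HAmu HAnu HD HBmu HBnu Hsum).
  - exact (boundary_abs_cont T kt jt mu nu D Htree Hmu Hnu HAmu HAnu HD HBmu HBnu Hsum).
Qed.
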